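(* Call-by-name coupled logical bisimilarity coincides with the contextual equivalences: $(\approx^n_1,\approx^n_2)=(\simeq^n,\cong^n)$. Consequently, both components coincide with each other: $\approx^n_1=\simeq^n=\cong^n=\approx^n_2$.
   Context: $\Lambda^\bullet$ is the set of closed $\lambda$-terms. Contexts are generated by $C::=x\mid[\cdot]\mid C\,C\mid\lambda x.C$, possibly with several holes numbered left to right; $C[\widetilde M]$ fills the $i$-th hole with $M_i$; $C[M]$ fills every hole with $M$. For $\mathcal{R}\subseteq\Lambda^\bullet\times\Lambda^\bullet$, $\mathcal{R}^\star=\{(C[\widetilde M],C[\widetilde N]) : C\text{ a context},\ M_i\,\mathcal{R}\,N_i\ \forall i,\ C[\widetilde M],C[\widetilde N]\in\Lambda^\bullet\}$. Call-by-name reduction on closed terms: $MN\longrightarrow M'N$ if $M\longrightarrow M'$, and $(\lambda x.P)N\longrightarrow P[N/x]$; $\Longrightarrow$ is its reflexive transitive closure; values are closed abstractions; $M{\Downarrow}$ means $M\Longrightarrow V$ for some value $V$. Contextual equivalence: $M\simeq^n N$ iff for all contexts $C$ with $C[M],C[N]$ closed, $C[M]{\Downarrow}\iff C[N]{\Downarrow}$. Evaluation contexts $\mathcal{E}::=[\cdot]\mid\mathcal{E}\,M$ ($M\in\Lambda^\bullet$); $M\cong^n N$ iff for all evaluation contexts $\mathcal{E}$, $\mathcal{E}[M]{\Downarrow}\iff\mathcal{E}[N]{\Downarrow}$. A coupled relation is a pair $(\mathcal{R}_1,\mathcal{R}_2)$ of relations on $\Lambda^\bullet$ with $\mathcal{R}_1\subseteq\mathcal{R}_2$.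 It is a (call-by-name) coupled logical bisimulation if whenever $M\,\mathcal{R}_2\,N$: (1) if $M\longrightarrow M'$ then there is $N'$ with $N\Longrightarrow N'$ and $M'\,\mathcal{R}_2\,N'$; (2) if $M=\lambda x.M'$ then $N\Longrightarrow\lambda x.N'$ for some $N'$ and for all $P,Q\in\Lambda^\bullet$ with $P\,\mathcal{R}_1^\star\,Q$, $M'[P/x]\,\mathcal{R}_2\,N'[Q/x]$; (3) the converses of (1),(2) with $M$ and $N$ exchanged. Coupled logical bisimilarity $(\approx^n_1,\approx^n_2)$ is the componentwise union of all such bisimulations. *)

(* Pure lambda calculus in de Bruijn notation (alpha-equivalence
   is syntactic equality). *)
From Stdlib Require Import Arith List.
Import ListNotations.

Inductive term : Type :=
| Var : nat -> term
| App : term -> term -> term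
| Lam : term -> term.

Fixpoint closed_at (k : nat) (t : term) : Prop :=
  match t with
  | Var n => n < k
  | App t1 t2 => closed_at k t1 /\ closed_at k t2
  | Lam t1 => closed_at (S k) t1
  end.

Definition closed (t : term) : Prop := closed_at 0 t.

(* subst k N t : replaces index k of t by the CLOSED term N (no lifting needed),
   decrementing the indices above k.  t[N/x] for the bound variable of a lambda
   is  subst 0 N body. *)
Fixpoint subst (k : nat) (N : term) (t : term) : term :=
  match t with
  | Var n => if Nat.eqb n k then N else if Nat.ltb k n then Var (pred n) else Var n
  | App t1 t2 => App (subst k N t1) (subst k N t2)
  | Lam t1 => Lam (subst (S k) N t1)
  end.

Inductive step : term -> term -> Prop :=
| step_app : forall M M' N, closed (App M N) -> step M M' -> step (App M N) (App M' N)
| step_beta : forall P N, closed (App (Lam P) N) -> step (App (Lam P) N) (subst 0 N P).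

Inductive steps : term -> term -> Prop :=
| steps_refl : forall M, steps M M
| steps_step : forall M M' M'', step M M' -> steps M' M'' -> steps M M''.

Definition is_value (V : term) : Prop := closed V /\ exists P, V = Lam P.

Definition converges (M : term) : Prop := exists V, steps M V /\ is_value V.

(* Contexts with possibly several holes, numbered left to right. *)
Inductive ctx : Type :=
| CVar : nat -> ctx
| CHole : ctx
| CApp : ctx -> ctx -> ctx
| CLam : ctx -> ctx.

Fixpoint nholes (C : ctx) : nat :=
  match C with
  | CVar _ => 0
  | CHole => 1
  | CApp C1 C2 => nholes C1 + nholes C2
  | CLam C1 => nholes C1
  end.

Fixpoint fill (C : ctx) (f : nat -> term) : term :=
  match C with
  | CVar n => Var n
  | CHole => f 0
  | CApp C1 C2 => App (fill C1 f) (fill C2 (fun i => f (nholes C1 + i)))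
  | CLam C1 => Lam (fill C1 f)
  end.

Definition rel := term -> term -> Prop.

Definition ctx_closure (R : rel) : rel :=
  fun A B => exists (C : ctx) (Ms Ns : nat -> term),
    (forall i, i < nholes C -> R (Ms i) (Ns i)) /\
    closed (fill C Ms) /\ closed (fill C Ns) /\
    A = fill C Ms /\ B = fill C Ns.

Definition ctx_equiv : rel :=
  fun M N => closed M /\ closed N /\
    forall C : ctx, closed (fill C (fun _ => M)) -> closed (fill C (fun _ => N)) ->
      (converges (fill C (fun _ => M)) <-> converges (fill C (fun _ => N))).

(* evaluation contexts  [.] M1 ... Mk  with closed Mi *)
Definition apps (M : term) (l : list term) : term := fold_left App l M.

Definition eval_equiv : rel :=
  fun M N => closed M /\ closed N /\
    forall l : list term, Forall closed l ->
      (converges (apps M l) <-> converges (apps N l)).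

Definition rel_on_closed (R : rel) : Prop := forall M N, R M N -> closed M /\ closed N.

Definition bisim_clauses (R1 R2 : rel) (M N : term) : Prop :=
  (forall M', step M M' -> exists N', steps N N' /\ R2 M' N') /\
  (forall M', M = Lam M' -> exists N', steps N (Lam N') /\
      forall P Q, closed P -> closed Q -> ctx_closure R1 P Q ->
        R2 (subst 0 P M') (subst 0 Q N')).

Definition coupled_logical_bisim (R1 R2 : rel) : Prop :=
  rel_on_closed R1 /\ rel_on_closed R2 /\
  (forall M N, R1 M N -> R2 M N) /\
  (forall M N, R2 M N -> bisim_clauses R1 R2 M N /\ bisim_clauses (fun a b => R1 b a) (fun a b => R2 b a) N M).

Definition bisim1 : rel := fun M N => exists R1 R2, coupled_logical_bisim R1 R2 /\ R1 M N.
Definition bisim2 : rel := fun M N => exists R1 R2, coupled_logical_bisim R1 R2 /\ R2 M N.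

From Stdlib Require Import Arith List Lia.
Import ListNotations.

(* Close R2 under
   application to argument lists related by the compatible closure R1^*, and add
   the pairs (\x.H) A, (\x.H') B with H R1^* H' and A R1^* B.  Along the
   resulting relation every reduction step of the left term is matched by the
   right term, up to a pair of the same shape (substituting R1^*-related
   arguments keeps bodies R1^*-related), so convergence transfers from left to
   right in every evaluation context; hence R2 is contained in evaluation-context
   equivalence.
   Completeness: the same simulation argument, now with heads related by the
   evaluation-context preorder itself, proves Milner's context lemma (that
   preorder is preserved by the compatible closure).  This makes the
   evaluation-context equivalence a coupled logical bisimulation, and also equal
   to contextual equivalence. *)

Lemma closed_at_mono t : forall k m, closed_at k t -> k <= m -> closed_at m t.
Proof.
  induction t; simpl; intros k m H Hle.
  - lia.
  - destruct H; split; [eapply IHt1|eapply IHt2]; eauto.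
  - eapply IHt; eauto; lia.
Qed.

Lemma subst_closed_id t : forall k N, closed_at k t -> subst k N t = t.
Proof.
  induction t; simpl; intros k N H.
  - destruct (Nat.eqb_spec n k); [lia|]. destruct (Nat.ltb_spec k n); [lia|]. reflexivity.
  - destruct H; rewrite IHt1, IHt2; auto.
  - rewrite IHt; auto.
Qed.

Lemma closed_at_subst t : forall k m N,
  closed_at (S m) t -> k <= m -> closed N -> closed_at m (subst k N t).
Proof.
  induction t; simpl; intros k m N H Hle HN.
  - destruct (Nat.eqb_spec n k).
    + eapply closed_at_mono; eauto; lia.
    + destruct (Nat.ltb_spec k n); simpl; lia.
  - destruct H; split; eauto.
  - apply IHt; auto; lia.
Qed.

Lemma closed_subst0 t N : closed_at 1 t -> closed N -> closed (subst 0 N t).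
Proof. intros; apply closed_at_subst; auto. Qed.

Lemma closed_lam_converges H : closed (Lam H) -> converges (Lam H).
Proof. intros c. exists (Lam H); split; [constructor|split; eauto]. Qed.

Lemma lam_irreducible P M : ~ step (Lam P) M.
Proof. intros H; inversion H. Qed.

Lemma step_closed M M' : step M M' -> closed M /\ closed M'.
Proof.
  induction 1; unfold closed in *; simpl in *.
  - destruct H; destruct IHstep; auto.
  - destruct H; split; auto. apply closed_subst0; auto.
Qed.

Lemma steps_closed M M' : steps M M' -> closed M -> closed M'.
Proof. induction 1; auto. intros; apply IHsteps, (step_closed _ _ H). Qed.

Lemma step_det M M1 : step M M1 -> forall M2, step M M2 -> M1 = M2.
Proof.
  induction 1; intros M2 H2; inversion H2; subst;
    solve [f_equal; auto | reflexivity | exfalso; eapply lam_irreducible; eauto].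
Qed.

Lemma steps_trans a b c : steps a b -> steps b c -> steps a c.
Proof. induction 1; intros; auto. econstructor; eauto. Qed.

Lemma converges_reduct X X' : steps X X' -> converges X -> converges X'.
Proof.
  intros Hs [V [HV Hv]]. exists V; split; auto.
  revert X' Hs. induction HV; intros X' Hs; inversion Hs; subst.
  - constructor.
  - destruct Hv as [_ [P ->]]. destruct (lam_irreducible _ _ H).
  - econstructor; eauto.
  - rewrite (step_det _ _ H _ H0) in *. auto.
Qed.

Lemma converges_expand X X' : steps X X' -> converges X' -> converges X.
Proof. intros Hs [V [HV Hv]]. exists V; split; auto. eapply steps_trans; eauto. Qed.

Lemma closed_progress M : closed M -> (exists P, M = Lam P) \/ exists M', step M M'.
Proof.
  induction M; unfold closed; simpl; intros H.
  - lia.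
  - destruct H as [H1 H2]. right. destruct (IHM1 H1) as [[P ->]|[M' HM]].
    + eexists; apply step_beta. unfold closed; simpl; auto.
    + eexists; apply step_app; eauto. unfold closed; simpl; auto.
  - left; eauto.
Qed.

Lemma apps_app A B M : apps M (A ++ B) = apps (apps M A) B.
Proof. unfold apps; rewrite fold_left_app; reflexivity. Qed.

Lemma apps_snoc A b M : apps M (A ++ [b]) = App (apps M A) b.
Proof. rewrite apps_app; reflexivity. Qed.

Lemma closed_apps A : forall M, closed (apps M A) <-> closed M /\ Forall closed A.
Proof.
  induction A; simpl; intros M.
  - split; auto. intros [H _]; auto.
  - change (apps M (a :: A)) with (apps (App M a) A). rewrite IHA.
    unfold closed; simpl. split.
    + intros [[H1 H2] H3]; auto.
    + intros [H1 H2]; inversion H2; auto.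
Qed.

Lemma closed_apps_var n A : ~ closed (apps (Var n) A).
Proof. intros H. apply closed_apps in H as [H _]. unfold closed in H; simpl in H; lia. Qed.

Lemma closed_spine t : closed t -> exists H A, t = apps (Lam H) A.
Proof.
  induction t; unfold closed; simpl; intros Ht.
  - lia.
  - destruct (IHt1 (proj1 Ht)) as [H [A ->]]. exists H, (A ++ [t2]). symmetry; apply apps_snoc.
  - exists t, []; auto.
Qed.

Lemma step_apps A : forall M M', step M M' -> Forall closed A -> step (apps M A) (apps M' A).
Proof.
  induction A; simpl; intros M M' H HA; auto.
  inversion HA; subst. apply IHA; auto. apply step_app; auto.
  unfold closed; simpl; split; auto. apply (step_closed _ _ H).
Qed.

Lemma steps_apps A M M' : steps M M' -> Forall closed A -> steps (apps M A) (apps M' A).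
Proof. induction 1; intros HA; econstructor; eauto using step_apps. Qed.

Lemma step_beta_apps A H a :
  closed (apps (Lam H) (a :: A)) -> step (apps (Lam H) (a :: A)) (apps (subst 0 a H) A).
Proof.
  intros Hc. apply closed_apps in Hc as [H1 H2]. inversion H2; subst.
  apply (step_apps A (App (Lam H) a)); auto. apply step_beta. unfold closed in *; simpl; auto.
Qed.

(** * Compatible closure *)

(* [compat R] is R^* without the closedness side conditions, so that it is
   inductive and relates open terms (bodies of abstractions). *)
Inductive compat (R : rel) : rel :=
| compat_var n : compat R (Var n) (Var n)
| compat_app a b c d : compat R a c -> compat R b d -> compat R (App a b) (App c d)
| compat_lam a c : compat R a c -> compat R (Lam a) (Lam c)
| compat_base M N : R M N -> compat R M N.

Lemma compat_refl R t : compat R t t.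
Proof. induction t; constructor; auto. Qed.

Lemma Forall2_compat_refl R l : Forall2 (compat R) l l.
Proof. induction l; constructor; auto using compat_refl. Qed.

Lemma compat_flip R a b : compat R a b -> compat (fun x y => R y x) b a.
Proof. induction 1; constructor; auto. Qed.

Lemma compat_mono (R R' : rel) :
  (forall x y, R x y -> R' x y) -> forall a b, compat R a b -> compat R' a b.
Proof. induction 2; constructor; auto. Qed.

Lemma compat_apps R A B :
  Forall2 (compat R) A B -> forall M N, compat R M N -> compat R (apps M A) (apps N B).
Proof. induction 1; simpl; intros; auto. apply IHForall2. constructor; auto. Qed.

Lemma compat_subst R : rel_on_closed R ->
  forall a c, compat R a c -> forall k P Q, compat R P Q -> closed P -> closed Q ->
  compat R (subst k P a) (subst k Q c).
Proof.
  intros HR. induction 1; simpl; intros k P Q HPQ cP cQ.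
  - destruct (Nat.eqb n k); auto. destruct (Nat.ltb k n); constructor.
  - constructor; auto.
  - constructor; auto.
  - destruct (HR _ _ H) as [c1 c2]. rewrite !subst_closed_id.
    + constructor; auto.
    + eapply closed_at_mono; eauto; lia.
    + eapply closed_at_mono; eauto; lia.
Qed.

Lemma compat_spine R X Y : compat R X Y ->
  (exists M N A B, R M N /\ Forall2 (compat R) A B /\ X = apps M A /\ Y = apps N B) \/
  (exists H H' A B, compat R H H' /\ Forall2 (compat R) A B /\
     X = apps (Lam H) A /\ Y = apps (Lam H') B) \/
  (exists n A B, X = apps (Var n) A /\ Y = apps (Var n) B).
Proof.
  induction 1.
  - right; right. exists n, [], []; auto.
  - destruct IHcompat1 as [[M [N [A [B [h1 [h2 [-> ->]]]]]]]
                          |[[H1 [H2 [A [B [h1 [h2 [-> ->]]]]]]]|[n [A [B [-> ->]]]]]].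
    + left. exists M, N, (A ++ [b]), (B ++ [d]). rewrite !apps_snoc.
      repeat split; auto. apply Forall2_app; auto.
    + right; left. exists H1, H2, (A ++ [b]), (B ++ [d]). rewrite !apps_snoc.
      repeat split; auto. apply Forall2_app; auto.
    + right; right. exists n, (A ++ [b]), (B ++ [d]). rewrite !apps_snoc. auto.
  - right; left. exists a, c, [], []. auto.
  - left. exists M, N, [], []. auto.
Qed.

Lemma fill_ext C : forall f g, (forall i, i < nholes C -> f i = g i) -> fill C f = fill C g.
Proof.
  induction C; simpl; intros f g H.
  - reflexivity.
  - apply H; lia.
  - f_equal; [apply IHC1|apply IHC2]; intros; apply H; lia.
  - f_equal; auto.
Qed.

Lemma fill_compat R C : forall Ms Ns,
  (forall i, i < nholes C -> R (Ms i) (Ns i)) -> compat R (fill C Ms) (fill C Ns).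
Proof.
  induction C; simpl; intros Ms Ns H.
  - constructor.
  - constructor; apply H; lia.
  - constructor; [apply IHC1 | apply IHC2]; intros; apply H; lia.
  - constructor; apply IHC; auto.
Qed.

Lemma compat_fill R P Q : compat R P Q -> exists C Ms Ns,
  (forall i, i < nholes C -> R (Ms i) (Ns i)) /\ P = fill C Ms /\ Q = fill C Ns.
Proof.
  induction 1.
  - exists (CVar n), (fun _ => Var 0), (fun _ => Var 0). simpl; split; auto; intros; lia.
  - destruct IHcompat1 as [C1 [M1 [N1 [h1 [-> ->]]]]].
    destruct IHcompat2 as [C2 [M2 [N2 [h2 [-> ->]]]]].
    set (join (f g : nat -> term) i := if i <? nholes C1 then f i else g (i - nholes C1)).
    assert (fill_join : forall f g, fill (CApp C1 C2) (join f g) = App (fill C1 f) (fill C2 g)).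
    { intros f g. simpl. f_equal; apply fill_ext; intros i Hi; unfold join.
      - destruct (Nat.ltb_spec i (nholes C1)); auto; lia.
      - destruct (Nat.ltb_spec (nholes C1 + i) (nholes C1)); [lia|]. f_equal; lia. }
    exists (CApp C1 C2), (join M1 M2), (join N1 N2). rewrite !fill_join.
    repeat split. simpl. intros i Hi. unfold join.
    destruct (Nat.ltb_spec i (nholes C1)); auto. apply h2; lia.
  - destruct IHcompat as [C1 [M1 [N1 [h1 [-> ->]]]]]. exists (CLam C1), M1, N1. simpl; auto.
  - exists CHole, (fun _ => M), (fun _ => N). simpl; split; auto.
Qed.

Lemma ctx_closure_iff_compat R P Q :
  ctx_closure R P Q <-> compat R P Q /\ closed P /\ closed Q.
Proof.
  split.
  - intros [C [Ms [Ns [H [cP [cQ [-> ->]]]]]]]. auto using fill_compat.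
  - intros [H [cP cQ]]. destruct (compat_fill _ _ _ H) as [C [Ms [Ns [h [-> ->]]]]].
    exists C, Ms, Ns; auto.
Qed.

Definition sim_step (S : rel) (X Y : term) : Prop :=
  converges Y \/ exists X1 Y1, step X X1 /\ S X1 Y1 /\ (converges Y1 -> converges Y).

Lemma sim_step_weaken S X Y Y' :
  sim_step S X Y' -> (converges Y' -> converges Y) -> sim_step S X Y.
Proof.
  intros [HY'|[X1 [Y1 [HX [HS HY1]]]]] HY; [left; auto|right].
  exists X1, Y1; auto.
Qed.

Lemma sim_step_reducts S X X1 Y Y1 :
  step X X1 -> steps Y Y1 -> S X1 Y1 -> sim_step S X Y.
Proof.
  intros sX sY HS. right. exists X1, Y1.
  split; [|split]; auto. apply converges_expand, sY.
Qed.

Lemma sim_step_converges (S : rel) : (forall X Y, S X Y -> sim_step S X Y) ->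
  forall X Y, S X Y -> converges X -> converges Y.
Proof.
  intros Hsim X Y HXY [V [HXV HV]]. revert Y HXY.
  induction HXV as [X|X X' V HXX' HX'V IH]; intros Y HXY;
    destruct (Hsim X Y HXY) as [HY|[X1 [Y1 [HX1 [HXY1 HY1]]]]]; auto.
  - destruct HV as [_ [P ->]]. destruct (lam_irreducible _ _ HX1).
  - rewrite (step_det _ _ HX1 _ HXX') in HXY1. auto.
Qed.

Definition spine_rel (R1 R2 : rel) : rel := fun X Y => closed X /\ closed Y /\
  ((exists M N A B, R2 M N /\ Forall2 (compat R1) A B /\ X = apps M A /\ Y = apps N B) \/
   (exists H H' A B, compat R1 H H' /\ Forall2 (compat R1) A B /\
      X = apps (Lam H) A /\ Y = apps (Lam H') B)).

Section SpineRel.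

Variables R1 R2 : rel.
Hypothesis R1_closed : rel_on_closed R1.
Hypothesis R1_sub_R2 : forall M N, R1 M N -> R2 M N.

Lemma compat_spine_rel X Y : compat R1 X Y -> closed X -> closed Y -> spine_rel R1 R2 X Y.
Proof.
  intros H cX cY. split; auto; split; auto.
  destruct (compat_spine _ _ _ H)
    as [[M [N [A [B [h1 [h2 [-> ->]]]]]]]|[h|[n [A [B [-> ->]]]]]].
  - left. exists M, N, A, B. auto.
  - right; auto.
  - destruct (closed_apps_var _ _ cX).
Qed.

Lemma spine_rel_lam H H' A B : compat R1 H H' -> Forall2 (compat R1) A B ->
  closed (apps (Lam H) A) -> closed (apps (Lam H') B) ->
  sim_step (spine_rel R1 R2) (apps (Lam H) A) (apps (Lam H') B).
Proof.
  intros HH HAB cX cY. destruct HAB as [|a b A B hab HAB].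
  - left. apply closed_lam_converges; auto.
  - pose proof (step_beta_apps _ _ _ cX) as sX.
    pose proof (step_beta_apps _ _ _ cY) as sY.
    apply (sim_step_reducts _ _ _ _ _ sX (steps_step _ _ _ sY (steps_refl _))).
    apply compat_spine_rel; [|apply (step_closed _ _ sX)|apply (step_closed _ _ sY)].
    apply compat_apps; auto. apply compat_subst; auto.
    + apply closed_apps in cX as [_ cA]. inversion cA; auto.
    + apply closed_apps in cY as [_ cB]. inversion cB; auto.
Qed.

Lemma spine_rel_converges :
  (forall M N A B, R2 M N -> Forall2 (compat R1) A B ->
     closed (apps M A) -> closed (apps N B) ->
     sim_step (spine_rel R1 R2) (apps M A) (apps N B)) ->
  forall X Y, spine_rel R1 R2 X Y -> converges X -> converges Y.
Proof.
  intros Hhead. apply sim_step_converges.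
  intros X Y [cX [cY [[M [N [A [B [h1 [h2 [-> ->]]]]]]]|[H [H' [A [B [h1 [h2 [-> ->]]]]]]]]]].
  - apply Hhead; auto.
  - apply spine_rel_lam; auto.
Qed.

End SpineRel.

(** * The context lemma *)

Definition eval_approx : rel := fun M N => closed M /\ closed N /\
  forall l, Forall closed l -> converges (apps M l) -> converges (apps N l).

Lemma eval_approx_closed : rel_on_closed eval_approx.
Proof. intros M N [cM [cN _]]; auto. Qed.

Lemma eval_approx_head M N A B : eval_approx M N -> Forall2 (compat eval_approx) A B ->
  closed (apps M A) -> closed (apps N B) ->
  sim_step (spine_rel eval_approx eval_approx) (apps M A) (apps N B).
Proof.
  intros [cM [cN HMN]] HAB cX cY.
  apply closed_apps in cX as [_ cA]. apply closed_apps in cY as [_ cB].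
  destruct (closed_spine M cM) as [H [A0 ->]].
  (* compare with [apps M B] first: it has the same head as the left term *)
  apply sim_step_weaken with (apps (apps (Lam H) A0) B); [|apply HMN; auto].
  rewrite <- !apps_app. apply spine_rel_lam; auto using eval_approx_closed, compat_refl.
  - apply Forall2_app; auto using Forall2_compat_refl.
  - rewrite apps_app. apply closed_apps; auto.
  - rewrite apps_app. apply closed_apps; auto.
Qed.

Lemma compat_eval_approx X Y :
  compat eval_approx X Y -> closed X -> closed Y -> eval_approx X Y.
Proof.
  intros H cX cY. split; auto; split; auto. intros l Hl.
  apply (spine_rel_converges eval_approx eval_approx eval_approx_closed); auto.
  - exact eval_approx_head.
  - apply compat_spine_rel; auto using eval_approx_closed.
    + apply compat_apps; auto using Forall2_compat_refl.
    + apply closed_apps; auto.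
    + apply closed_apps; auto.
Qed.

Lemma eval_equiv_approx M N : eval_equiv M N <-> eval_approx M N /\ eval_approx N M.
Proof.
  split.
  - intros [cM [cN H]]. split; split; auto; split; auto; intros l Hl; apply H; auto.
  - intros [[cM [cN H1]] [_ [_ H2]]]. split; auto; split; auto; split; auto.
Qed.

Lemma eval_equiv_sym M N : eval_equiv M N -> eval_equiv N M.
Proof. intros [a [b c]]; split; auto; split; auto; intros; symmetry; auto. Qed.

Lemma eval_equiv_trans M N P : eval_equiv M N -> eval_equiv N P -> eval_equiv M P.
Proof.
  intros [a [b c]] [d [e f]]; split; auto; split; auto; intros l Hl.
  rewrite c; auto.
Qed.

Lemma compat_eval_equiv X Y :
  compat eval_equiv X Y -> closed X -> closed Y -> eval_equiv X Y.
Proof.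
  intros H cX cY. apply eval_equiv_approx. split; apply compat_eval_approx; auto.
  - apply (compat_mono eval_equiv); auto.
    intros x y Hxy. apply eval_equiv_approx in Hxy; tauto.
  - apply (compat_mono (fun x y => eval_equiv y x)); [|apply compat_flip; auto].
    intros x y Hxy. apply eval_equiv_approx in Hxy; tauto.
Qed.

Lemma eval_equiv_steps X X' : steps X X' -> closed X -> eval_equiv X X'.
Proof.
  intros Hs cX. split; auto; split; [eapply steps_closed; eauto|]. intros l Hl.
  pose proof (steps_apps _ _ _ Hs Hl). split.
  - apply converges_reduct; auto.
  - apply converges_expand; auto.
Qed.

(** * Soundness *)

Definition coupled_logical_sim (R1 R2 : rel) : Prop :=
  rel_on_closed R2 /\ (forall M N, R1 M N -> R2 M N) /\
  (forall M N, R2 M N -> bisim_clauses R1 R2 M N).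

Lemma coupled_logical_sim_head R1 R2 M N A B : coupled_logical_sim R1 R2 ->
  R2 M N -> Forall2 (compat R1) A B -> closed (apps M A) -> closed (apps N B) ->
  sim_step (spine_rel R1 R2) (apps M A) (apps N B).
Proof.
  intros [R2_closed [_ Hclauses]] HMN HAB cX cY.
  destruct (Hclauses _ _ HMN) as [Hstep Hlam].
  destruct (R2_closed _ _ HMN) as [cM cN].
  pose proof cY as cB; apply closed_apps in cB as [_ cB].
  destruct (closed_progress M cM) as [[M' ->]|[M' sM]].
  - destruct (Hlam M' eq_refl) as [N' [sN HN']].
    assert (cN' : closed (Lam N')) by (eapply steps_closed; eauto).
    destruct HAB as [|a b A B hab HAB].
    + left. apply (converges_expand _ _ sN), closed_lam_converges; auto.
    + inversion cB; subst.
      pose proof (step_beta_apps _ _ _ cX) as sX.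
      assert (sY : steps (apps N (b :: B)) (apps (subst 0 b N') B)).
      { eapply steps_trans; [apply steps_apps; eauto|].
        econstructor; [|constructor]. apply step_beta_apps, closed_apps; auto. }
      apply (sim_step_reducts _ _ _ _ _ sX sY).
      split; [apply (step_closed _ _ sX)|]. split; [eapply steps_closed; eauto|].
      left. exists (subst 0 a M'), (subst 0 b N'), A, B. repeat split; auto.
      apply closed_apps in cX as [_ cA]. inversion cA; subst.
      apply HN'; auto. apply ctx_closure_iff_compat; auto.
  - destruct (Hstep M' sM) as [N' [sN HN']].
    pose proof cX as cA; apply closed_apps in cA as [_ cA].
    assert (sX : step (apps M A) (apps M' A)) by (apply step_apps; auto).
    assert (sY : steps (apps N B) (apps N' B)) by (apply steps_apps; auto).
    apply (sim_step_reducts _ _ _ _ _ sX sY).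
    split; [apply (step_closed _ _ sX)|]. split; [eapply steps_closed; eauto|].
    left. exists M', N', A, B. auto.
Qed.

Lemma coupled_logical_sim_eval_approx R1 R2 M N :
  coupled_logical_sim R1 R2 -> R2 M N -> eval_approx M N.
Proof.
  intros Hsim HMN. pose proof Hsim as [R2_closed [R1_sub_R2 _]].
  destruct (R2_closed _ _ HMN) as [cM cN]. split; auto; split; auto. intros l Hl.
  apply (spine_rel_converges R1 R2); auto.
  - intros a b Hab. apply R2_closed, R1_sub_R2, Hab.
  - intros; apply coupled_logical_sim_head; auto.
  - split; [apply closed_apps; auto|]. split; [apply closed_apps; auto|].
    left. exists M, N, l, l. auto using Forall2_compat_refl.
Qed.

Lemma coupled_logical_bisim_sound R1 R2 M N :
  coupled_logical_bisim R1 R2 -> R2 M N -> eval_equiv M N.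
Proof.
  intros [R1_closed [R2_closed [R1_sub_R2 Hclauses]]] HMN.
  apply eval_equiv_approx; split.
  - apply (coupled_logical_sim_eval_approx R1 R2); auto.
    split; [|split]; auto. intros a b Hab; apply (Hclauses a b Hab).
  - apply (coupled_logical_sim_eval_approx (fun a b => R1 b a) (fun a b => R2 b a)); auto.
    split; [|split]; auto.
    + intros a b Hab. destruct (R2_closed _ _ Hab); auto.
    + intros a b Hab; apply (Hclauses b a Hab).
Qed.

(** * Completeness *)

Lemma eval_equiv_bisim_clauses M N :
  eval_equiv M N -> bisim_clauses eval_equiv eval_equiv M N.
Proof.
  intros HMN. pose proof HMN as [cM [cN HH]]. split.
  - intros M' Hs. exists N; split; [constructor|].
    apply eval_equiv_trans with M; auto. apply eval_equiv_sym, eval_equiv_steps; auto.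
    econstructor; eauto. constructor.
  - intros M' ->. assert (Hc : converges N).
    { apply (HH []); [constructor|]. apply closed_lam_converges; auto. }
    destruct Hc as [V [Hs [cV [N' ->]]]]. exists N'. split; auto.
    intros P Q cP cQ HPQ. apply ctx_closure_iff_compat in HPQ as [HPQ _].
    unfold closed in cM, cV; simpl in cM, cV.
    (* (\x.M') P ~ N Q by compatibility, then reduce both sides *)
    apply eval_equiv_trans with (App (Lam M') P).
    + apply eval_equiv_sym, eval_equiv_steps.
      * econstructor; [apply step_beta|constructor]. unfold closed; simpl; auto.
      * unfold closed; simpl; auto.
    + apply eval_equiv_trans with (App N Q).
      * apply compat_eval_equiv; [apply compat_app; [apply compat_base|]| |];
          auto; unfold closed; simpl; auto.
      * apply eval_equiv_steps; [|unfold closed; simpl; auto].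
        eapply steps_trans; [apply (steps_apps [Q] N (Lam N')); auto|].
        econstructor; [|constructor]. apply step_beta. unfold closed; simpl; auto.
Qed.

Lemma eval_equiv_coupled_logical_bisim : coupled_logical_bisim eval_equiv eval_equiv.
Proof.
  assert (ev_closed : rel_on_closed eval_equiv) by (intros M N [cM [cN _]]; auto).
  split; [|split; [|split]]; auto. intros M N HMN.
  split; [apply eval_equiv_bisim_clauses; auto|].
  destruct (eval_equiv_bisim_clauses N M (eval_equiv_sym _ _ HMN)) as [Hstep Hlam]. split.
  - intros M' Hs. destruct (Hstep M' Hs) as [N' [s HN']].
    exists N'; split; auto using eval_equiv_sym.
  - intros M' e. destruct (Hlam M' e) as [N' [s HN']].
    exists N'; split; auto.
    intros P Q cP cQ HPQ. apply eval_equiv_sym, HN'; auto.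
    apply ctx_closure_iff_compat in HPQ as [HPQ _]. apply ctx_closure_iff_compat.
    split; auto. apply (compat_mono (fun a b => eval_equiv b a)); auto.
    intros; apply eval_equiv_sym; auto.
Qed.

Fixpoint ctx_of_term (t : term) : ctx :=
  match t with
  | Var n => CVar n
  | App a b => CApp (ctx_of_term a) (ctx_of_term b)
  | Lam a => CLam (ctx_of_term a)
  end.

Lemma fill_ctx_of_term t f : fill (ctx_of_term t) f = t.
Proof. revert f; induction t; simpl; intros; f_equal; auto. Qed.

Lemma fill_apps_ctx l : forall C M,
  fill (fold_left (fun C a => CApp C (ctx_of_term a)) l C) (fun _ => M)
  = apps (fill C (fun _ => M)) l.
Proof.
  induction l; simpl; intros; auto. rewrite IHl. simpl. rewrite fill_ctx_of_term. reflexivity.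
Qed.

Lemma ctx_equiv_iff_eval_equiv M N : ctx_equiv M N <-> eval_equiv M N.
Proof.
  split.
  - intros [cM [cN H]]. split; auto; split; auto. intros l Hl.
    pose proof (H (fold_left (fun C a => CApp C (ctx_of_term a)) l CHole)) as H'.
    rewrite !fill_apps_ctx in H'. apply H'; apply closed_apps; auto.
  - intros HMN. pose proof HMN as [cM [cN _]]. split; auto; split; auto. intros C c1 c2.
    assert (h : eval_equiv (fill C (fun _ => M)) (fill C (fun _ => N)))
      by (apply compat_eval_equiv; auto; apply fill_compat; auto).
    destruct h as [_ [_ h]]. apply (h []). constructor.
Qed.

Theorem mainTheorem8 :
  (forall M N, bisim1 M N <-> ctx_equiv M N) /\
  (forall M N, bisim2 M N <-> eval_equiv M N) /\
  (forall M N, ctx_equiv M N <-> eval_equiv M N).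
Proof.
  split; [|split]; intros M N; [rewrite ctx_equiv_iff_eval_equiv| |]; split.
  - intros [R1 [R2 [Hbisim H]]]. apply (coupled_logical_bisim_sound R1 R2); auto.
    apply Hbisim; auto.
  - exists eval_equiv, eval_equiv. auto using eval_equiv_coupled_logical_bisim.
  - intros [R1 [R2 [Hbisim H]]]. apply (coupled_logical_bisim_sound R1 R2); auto.
  - exists eval_equiv, eval_equiv. auto using eval_equiv_coupled_logical_bisim.
  - apply ctx_equiv_iff_eval_equiv.
  - apply ctx_equiv_iff_eval_equiv.
Qed.
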